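(* For every planar forest $F$: (1) $B^+(f_F)=f_{\bullet F}$, where $\bullet F$ is the forest obtained by placing the one-vertex tree $\bullet$ to the left of $F$; (2) $\gamma(f_F)=0$ if $F$ is not a tree, and $\gamma(f_F)=f_{B^-(F)}$ if $F$ is a tree, where $B^-(F)$ is the forest obtained by deleting the root of $F$; (3) $\Delta(f_F)=\sum_{F_1,F_2}f_{F_2}\otimes f_{F_1}$, the sum over all pairs of planar forests $(F_1,F_2)$ with $F_1F_2=F$.
   Context: Let $K$ be a field. Planar rooted trees have their children linearly ordered left to right; a planar forest is a finite, possibly empty, sequence $t_1\cdots t_n$ of planar rooted trees ($1$ = empty forest). $\mathcal{H}$ is the free associative unital $K$-algebra on planar rooted trees, with basis the planar forests and product concatenation, graded by weight (number of vertices). $B^+(F)$ is the tree obtained by grafting the trees of $F$ (in order) on a new common root. $\varepsilon(F)=\delta_{F,1}$. $\Delta$ is the unique linear map with $\Delta(1)=1\otimes1$, $\Delta(xy)=(x\otimes1)\Delta(y)+\Delta(x)(1\otimes y)-x\otimes y$, $\Delta(B^+(x))=B^+(x)\otimes 1+(\mathrm{Id}\otimes B^+)\Delta(x)$. $\gamma:\mathcal{H}\to\mathcal{H}$ is linear with $\gamma(t_1\cdots t_n)=\delta_{t_1,\bullet}t_2\cdots t_n$ ($\bullet$ the one-vertex tree) and $\gamma(1)=0$. $\langle-,-\rangle$ is the unique bilinear form on $\mathcal{H}$ with $\langle1,x\rangle=\varepsilon(x)$, $\langle xy,z\rangle=\langle y\otimes x,\Delta(z)\rangle$ (with $\langle a\otimes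 b,c\otimes d\rangle=\langle a,c\rangle\langle b,d\rangle$) and $\langle B^+(x),y\rangle=\langle x,\gamma(y)\rangle$; it is symmetric, non-degenerate, and forests of different weights are orthogonal. $(f_F)_F$ is the dual basis of the basis of forests: $f_F\in\mathcal{H}$ with $\langle f_F,G\rangle=\delta_{F,G}$ for all planar forests $G$. *)

From HB Require Import structures.
From mathcomp Require Import all_boot all_algebra.
Set Implicit Arguments. Unset Strict Implicit. Unset Printing Implicit Defensive.
Import GRing.Theory.
Local Open Scope ring_scope.

Inductive tree : Type := Node of seq tree.
(* Planar forests: finite sequences of planar trees; [::] is the empty forest 1. *)
Notation forest := (seq tree).

Fixpoint tree_enc (t : tree) : GenTree.tree unit :=
  let: Node ts := t in GenTree.Node 0 (map tree_enc ts).
Fixpoint tree_dec (g : GenTree.tree unit) : tree :=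
  match g with
  | GenTree.Leaf _ => Node [::]
  | GenTree.Node _ gs => Node (map tree_dec gs)
  end.
Fixpoint tree_encK (t : tree) : tree_dec (tree_enc t) = t :=
  match t return tree_dec (tree_enc t) = t with
  | Node ts => f_equal Node
      ((fix aux (l : seq tree) : map tree_dec (map tree_enc l) = l :=
          match l return map tree_dec (map tree_enc l) = l with
          | [::] => erefl
          | x :: l' => f_equal2 cons (tree_encK x) (aux l')
          end) ts)
  end.
HB.instance Definition _ := Equality.copy tree (can_type tree_encK).

Definition bullet : tree := Node [::].

Section Hopf.
Variable K : fieldType.

(* Elements of H are represented as finite formal K-linear combinations of
   planar forests (lists of (coefficient, forest)); two representations denote
   the same element of H iff all their coefficients agree (heq).  Elements of
   H (x) H are formal combinations of pairs of forests (F1, F2) = F1 (x) F2. *)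
Definition H := seq (K * forest).
Definition H2 := seq (K * (forest * forest)).

Definition coef (x : H) (G : forest) : K := \sum_(p <- x | p.2 == G) p.1.
Definition coef2 (x : H2) (G : forest * forest) : K := \sum_(p <- x | p.2 == G) p.1.
Definition heq (x y : H) : Prop := forall G, coef x G = coef y G.
Definition heq2 (x y : H2) : Prop := forall G, coef2 x G = coef2 y G.

Definition basis (F : forest) : H := [:: (1, F)].
Definition tensor (x y : H) : H2 := [seq (p.1 * q.1, (p.2, q.2)) | p <- x, q <- y].

Definition epsF (F : forest) : K := (F == [::])%:R.

Definition gammaF (F : forest) : H :=
  match F with
  | Node [::] :: G => [:: (1, G)]
  | _ => [::]
  end.

(* Coproduct on basis forests, defined by the recursion
   Delta(1) = 1(x)1,
   Delta(t G) = (t(x)1) Delta(G) + Delta(t) (1(x)G) - t(x)G,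
   Delta(B+(F)) = B+(F)(x)1 + (Id (x) B+) Delta(F). *)
Definition deltaF_gen (dT : tree -> H2) : forest -> H2 :=
  fix dF (F : forest) : H2 :=
    match F with
    | [::] => [:: (1, ([::], [::]))]
    | s :: G =>
        [seq (p.1, (s :: p.2.1, p.2.2)) | p <- dF G]
        ++ [seq (p.1, (p.2.1, p.2.2 ++ G)) | p <- dT s]
        ++ [:: (-1, ([:: s], G))]
    end.
Fixpoint deltaT (t : tree) : H2 :=
  let: Node F := t in
  (1, ([:: t], [::])) ::
  [seq (p.1, (p.2.1, [:: Node p.2.2])) | p <- deltaF_gen deltaT F].
Definition deltaF : forest -> H2 := deltaF_gen deltaT.

(* The bilinear form on basis forests, defined by recursion on the first
   argument using <1,z> = eps(z), <x y, z> = <y (x) x, Delta z>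
   (with x a tree and y a forest), and <B+(x), y> = <x, gamma(y)>. *)
Definition pairF_gen (pT : tree -> forest -> K) : forest -> forest -> K :=
  fix pF (F : forest) (z : forest) : K :=
    match F with
    | [::] => epsF z
    | s :: G =>
        if G is [::] then pT s z
        else \sum_(p <- deltaF z) p.1 * pF G p.2.1 * pT s p.2.2
    end.
Fixpoint pairT (t : tree) (z : forest) : K :=
  let: Node F := t in
  match z with
  | Node [::] :: z' => pairF_gen pairT F z'
  | _ => 0
  end.
Definition pairF : forest -> forest -> K := pairF_gen pairT.

Definition Bplus (x : H) : H := [seq (p.1, [:: Node p.2]) | p <- x].
Definition gamma (x : H) : H :=
  flatten [seq [seq (p.1 * q.1, q.2) | q <- gammaF p.2] | p <- x].
Definition Delta (x : H) : H2 :=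
  flatten [seq [seq (p.1 * q.1, q.2) | q <- deltaF p.2] | p <- x].
Definition pair (x y : H) : K :=
  \sum_(p <- x) \sum_(q <- y) p.1 * q.1 * pairF p.2 q.2.

End Hopf.

From mathcomp Require Import all_boot all_algebra ring.
Set Implicit Arguments. Unset Strict Implicit. Unset Printing Implicit Defensive.
Import GRing.Theory.
Local Open Scope ring_scope.

(* The pairing is symmetric and nondegenerate, with (f_F) as dual basis, so each identity can
   be checked by pairing both sides with an arbitrary forest.  By its definition B^+ is adjoint
   to gamma, and concatenation is adjoint to Delta: <x y, z> = <y (x) x, Delta z> for a tree x.
   Coassociativity of Delta extends this to every forest x, the same holds with the arguments
   swapped, and together these give symmetry by induction.  Hence
   <B^+ f_F, G> = <f_F, gamma G> = delta_{bullet F, G},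
   <gamma f_F, G> = <f_F, B^+ G> = delta_{F, B^+ G}, and
   <Delta f_F, G1 (x) G2> = <f_F, G2 G1> = delta_{F, G2 G1},
   which are the pairings of the claimed right-hand sides. *)

Section ForestInduction.
Variable P : forest -> Prop.
Hypothesis P_nil : P [::].
Hypothesis P_node_cons : forall X G, P X -> P G -> P (Node X :: G).

Lemma forest_nested_ind F : P F.
Proof.
have cons_tree : forall t G, P G -> P (t :: G).
  fix cons_tree 1 => -[X] G PG; apply: P_node_cons PG.
  by elim: X => [|t X IHX]; [exact: P_nil | exact: cons_tree].
by elim: F => // t G; exact: cons_tree.
Qed.
End ForestInduction.

Section LinearExtension.
Variable R : comNzRingType.
Implicit Types T U V : Type.

(* The value at the formal combination [x] of the linear extension of [g]; identities in H and
   H (x) H are tested through it. *)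
Definition linext T (x : seq (R * T)) (g : T -> R) : R := \sum_(p <- x) p.1 * g p.2.
Definition linext2 T U (x : seq (R * (T * U))) (h : T -> U -> R) : R :=
  linext x (fun p => h p.1 p.2).

Lemma eq_linext T (x : seq (R * T)) g g' : g =1 g' -> linext x g = linext x g'.
Proof. by move=> E; apply: eq_bigr => p _; rewrite E. Qed.

Lemma eq_linext2 T U (x : seq (R * (T * U))) h h' :
  (forall a b, h a b = h' a b) -> linext2 x h = linext2 x h'.
Proof. by move=> E; apply: eq_linext => p; rewrite E. Qed.

Lemma linext_nil T (g : T -> R) : linext [::] g = 0.
Proof. exact: big_nil. Qed.

Lemma linext_cons T c a (x : seq (R * T)) g :
  linext ((c, a) :: x) g = c * g a + linext x g.
Proof. exact: big_cons. Qed.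

Lemma linext_map T V (k : V -> T) (x : seq (R * V)) g :
  linext [seq (p.1, k p.2) | p <- x] g = linext x (g \o k).
Proof. by rewrite /linext big_map. Qed.

Lemma linext0 T (x : seq (R * T)) : linext x (fun=> 0) = 0.
Proof. by rewrite /linext big1 // => p _; rewrite mulr0. Qed.

Lemma linext2_eq0 T U (x : seq (R * (T * U))) h :
  (forall a b, h a b = 0) -> linext2 x h = 0.
Proof. by move=> h0; rewrite /linext2 (eq_linext _ (g' := fun=> 0)) ?linext0. Qed.

Lemma linextD T (x : seq (R * T)) g g' :
  linext x (fun a => g a + g' a) = linext x g + linext x g'.
Proof. by rewrite /linext -big_split; apply: eq_bigr => p _; rewrite mulrDr. Qed.

Lemma linextN T (x : seq (R * T)) g : linext x (fun a => - g a) = - linext x g.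
Proof. by rewrite /linext -sumrN; apply: eq_bigr => p _; rewrite mulrN. Qed.

Lemma linextMl T c (x : seq (R * T)) g : linext x (fun a => c * g a) = c * linext x g.
Proof. by rewrite /linext mulr_sumr; apply: eq_bigr => p _; rewrite mulrCA. Qed.

Lemma linextMr T c (x : seq (R * T)) g : linext x (fun a => g a * c) = linext x g * c.
Proof. by rewrite /linext mulr_suml; apply: eq_bigr => p _; rewrite mulrA. Qed.

Lemma exchange_linext T V (x : seq (R * T)) (y : seq (R * V)) k :
  linext x (fun a => linext y (k a)) = linext y (fun b => linext x (k^~ b)).
Proof.
rewrite /linext; under eq_bigr do rewrite mulr_sumr.
rewrite exchange_big; apply: eq_bigr => q _.
by rewrite mulr_sumr; apply: eq_bigr => p _; rewrite mulrCA.
Qed.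

Lemma linext2D T U (x : seq (R * (T * U))) h h' :
  linext2 x (fun a b => h a b + h' a b) = linext2 x h + linext2 x h'.
Proof. exact: linextD. Qed.

Lemma linext2B T U (x : seq (R * (T * U))) h h' :
  linext2 x (fun a b => h a b - h' a b) = linext2 x h - linext2 x h'.
Proof. by rewrite linext2D -linextN. Qed.

Lemma linext2Ml T U c (x : seq (R * (T * U))) h :
  linext2 x (fun a b => c * h a b) = c * linext2 x h.
Proof. exact: linextMl. Qed.

Lemma linext2Mr T U c (x : seq (R * (T * U))) h :
  linext2 x (fun a b => h a b * c) = linext2 x h * c.
Proof. exact: linextMr. Qed.

Lemma exchange_linext2 T U T' U' (x : seq (R * (T * U))) (y : seq (R * (T' * U'))) k :
  linext2 x (fun a b => linext2 y (k a b)) =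
  linext2 y (fun c d => linext2 x (fun a b => k a b c d)).
Proof. exact: exchange_linext. Qed.

End LinearExtension.

Section CoproductPairing.
Variable K : fieldType.
Implicit Types (s : tree) (X G x y z : forest).

Local Notation dsum z h := (linext2 (deltaF K z) h).
Local Notation P := (pairF K).

Lemma dsum_nil h : dsum [::] h = h [::] [::].
Proof. by rewrite /linext2 linext_cons linext_nil mul1r addr0. Qed.

Lemma dsum_cons_deltaT s G h : dsum (s :: G) h =
  dsum G (fun a b => h (s :: a) b) + linext2 (deltaT K s) (fun a b => h a (b ++ G))
  - h [:: s] G.
Proof.
by rewrite /linext2 /linext /= !big_cat !big_map big_seq1 /= mulN1r addrA.
Qed.

Lemma dsum_seq1 s h : dsum [:: s] h = linext2 (deltaT K s) h.
Proof.
rewrite dsum_cons_deltaT dsum_nil (@eq_linext2 _ _ _ _ _ h); first by rewrite addrC addKr.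
by move=> a b; rewrite cats0.
Qed.

Lemma dsum_cons s G h : dsum (s :: G) h =
  dsum G (fun a b => h (s :: a) b) + dsum [:: s] (fun a b => h a (b ++ G)) - h [:: s] G.
Proof. by rewrite dsum_cons_deltaT dsum_seq1. Qed.

Lemma dsum_node X h :
  dsum [:: Node X] h = h [:: Node X] [::] + dsum X (fun a b => h a [:: Node b]).
Proof. by rewrite dsum_seq1 /linext2 /linext /= big_cons big_map mul1r. Qed.

Lemma dsum_counitr z g : dsum z (fun a b => (b == [::])%:R * g a) = g z.
Proof.
elim: z g => [|[X] G IH] g; first by rewrite dsum_nil mul1r.
rewrite dsum_cons IH dsum_node /= linext2_eq0 ?addr0 ?addrK // => a b.
by rewrite mul0r.
Qed.

Lemma dsum_counitl z g : dsum z (fun a b => (a == [::])%:R * g b) = g z.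
Proof.
elim/forest_nested_ind: z g => [|X G IHX IHG] g; first by rewrite dsum_nil mul1r.
rewrite dsum_cons linext2_eq0 ?add0r => [|a b]; last by rewrite mul0r.
by rewrite dsum_node /= mul0r add0r subr0 (IHX (fun b => g (Node b :: G))).
Qed.

Lemma dsum_cat x y h : dsum (x ++ y) h =
  dsum y (fun a b => h (x ++ a) b) + dsum x (fun a b => h a (b ++ y)) - h x y.
Proof.
elim: x h => [|s x IH] h; first by rewrite dsum_nil addrK.
rewrite cat_cons dsum_cons IH [dsum (s :: x) _]dsum_cons.
rewrite (@eq_linext2 _ _ _ _ (fun a b => h a ((b ++ x) ++ y)) (fun a b => h a (b ++ x ++ y))).
  by rewrite /=; ring.
by move=> a b; rewrite catA.
Qed.

Definition coassoc_at z := forall h : forest -> forest -> forest -> K,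
  dsum z (fun a b => dsum a (fun c d => h c d b)) = dsum z (fun a b => dsum b (h a)).

Lemma coassoc_node X : coassoc_at X -> coassoc_at [:: Node X].
Proof.
move=> IH h; rewrite !dsum_node dsum_nil.
under [in RHS]eq_linext2 => a b do rewrite dsum_node.
by rewrite linext2D -IH; ring.
Qed.

Lemma coassoc_cat x y : coassoc_at x -> coassoc_at y -> coassoc_at (x ++ y).
Proof.
move=> Hx Hy h; rewrite dsum_cat [in RHS]dsum_cat.
under eq_linext2 => a b do rewrite dsum_cat.
under [dsum x (fun a b => dsum (b ++ y) _)]eq_linext2 => a b do rewrite dsum_cat.
rewrite !linext2B !linext2D.
rewrite (Hy (fun c d e => h (x ++ c) d e)) (Hx (fun c d e => h c d (e ++ y))).
rewrite (exchange_linext2 (deltaF K x) (deltaF K y) (fun a b c d => h a (b ++ c) d)).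
ring.
Qed.

Lemma dsum_coassoc z : coassoc_at z.
Proof.
elim/forest_nested_ind: z => [|X G IHX IHG]; first by move=> h; rewrite !dsum_nil.
exact: (coassoc_cat (coassoc_node IHX) IHG).
Qed.

Lemma pairF_nil z : P [::] z = (z == [::])%:R.
Proof. by []. Qed.

Lemma pairF_node_l X z :
  P [:: Node X] z = if z is Node [::] :: z' then P X z' else 0.
Proof. by case: z => [|[[|? ?]] ?]. Qed.

Lemma pairF_cons s G z : P (s :: G) z = dsum z (fun a b => P G a * P [:: s] b).
Proof.
case: G => [|g G]; first by rewrite (dsum_counitl _ (fun b => P [:: s] b)).
by rewrite /linext2 /linext; apply: eq_bigr => p _; rewrite mulrA.
Qed.

(* Coassociativity lets the defining recursion pass from a leading tree to a leading forest. *)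
Lemma pairF_cat x y z : P (x ++ y) z = dsum z (fun a b => P y a * P x b).
Proof.
elim: x z => [|s x IH] z.
  rewrite -{1}(dsum_counitr z (P y)).
  by apply: eq_linext2 => a b; rewrite pairF_nil mulrC.
rewrite cat_cons pairF_cons.
under eq_linext2 => a b do rewrite IH -linext2Mr.
rewrite (dsum_coassoc z (fun c d e => P y c * P x d * P [:: s] e)).
apply: eq_linext2 => a b; rewrite pairF_cons -linext2Ml.
by apply: eq_linext2 => c d; rewrite mulrA.
Qed.

Definition pairF_multiplicative_r z :=
  forall x y, P z (x ++ y) = dsum z (fun a b => P a y * P b x).

Lemma pairF_multiplicative_r_nil : pairF_multiplicative_r [::].
Proof.
move=> x y; rewrite dsum_nil !pairF_nil.
by case: x => [|? ?]; case: y => [|? ?]; rewrite /= ?mul1r ?mulr0 ?mul0r.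
Qed.

Lemma pairF_multiplicative_r_node X :
  pairF_multiplicative_r X -> pairF_multiplicative_r [:: Node X].
Proof.
move=> SX [|t x] y; rewrite dsum_node pairF_nil /=.
  by rewrite mulr1 linext2_eq0 ?addr0 // => a b; rewrite mulr0.
rewrite mulr0 add0r; case: t => [[|u T]] /=; first exact: SX.
by rewrite linext2_eq0 // => a b; rewrite mulr0.
Qed.

Lemma pairF_multiplicative_r_cat u v :
  pairF_multiplicative_r u -> pairF_multiplicative_r v ->
  pairF_multiplicative_r (u ++ v).
Proof.
move=> Su Sv x y.
rewrite pairF_cat dsum_cat [in RHS]dsum_cat.
have -> : dsum y (fun a b => P v (x ++ a) * P u b) =
          dsum v (fun c d => P (u ++ c) y * P d x).
  under eq_linext2 => a b do rewrite Sv -linext2Mr.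
  rewrite exchange_linext2; apply: eq_linext2 => c d.
  rewrite pairF_cat -linext2Mr; apply: eq_linext2 => a b; ring.
have -> : dsum x (fun a b => P v a * P u (b ++ y)) =
          dsum u (fun c d => P c y * P (d ++ v) x).
  under eq_linext2 => a b do rewrite Su -linext2Ml.
  rewrite exchange_linext2; apply: eq_linext2 => c d.
  rewrite pairF_cat -linext2Ml; apply: eq_linext2 => a b; ring.
ring.
Qed.

Lemma pairF_cat_r z x y : P z (x ++ y) = dsum z (fun a b => P a y * P b x).
Proof.
move: z x y; apply: forest_nested_ind => [|X G SX SG].
  exact: pairF_multiplicative_r_nil.
exact: (pairF_multiplicative_r_cat (pairF_multiplicative_r_node SX) SG).
Qed.

Lemma pairF_nil_r z : P z [::] = (z == [::])%:R.
Proof.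
case: z => [|s G] //; rewrite pairF_cons dsum_nil.
by case: s => X; rewrite mulr0.
Qed.

Lemma pairF_node_node S b :
  P [:: Node S] [:: Node b] = ((S == [::]) && (b == [::]))%:R.
Proof. by case: b => [|u b]; rewrite ?andbF // andbT pairF_node_l /= pairF_nil_r. Qed.

Lemma pairF_node_r z X :
  P z [:: Node X] = if z is Node [::] :: z' then P z' X else 0.
Proof.
case: z => [|[S] G] //; rewrite pairF_cons dsum_node pairF_nil_r mulr0 add0r.
under eq_linext2 => a b do rewrite pairF_node_node.
case: S => [|u S] /=; last by rewrite linext2_eq0 // => a b; rewrite mulr0.
by rewrite -(dsum_counitr X (P G)); apply: eq_linext2 => a b; rewrite mulrC.
Qed.

Lemma pairF_sym x z : P x z = P z x.
Proof.
elim/forest_nested_ind: x z => [|X G IHX IHG] z; first by rewrite pairF_nil pairF_nil_r.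
rewrite -cat1s pairF_cat pairF_cat_r; apply: eq_linext2 => a b.
rewrite IHG pairF_node_r pairF_node_l; congr (_ * _).
by case: b => [|[[|u T]] b] //; rewrite IHX.
Qed.

End CoproductPairing.

Lemma sum_take_drop_eq (R : nzSemiRingType) (T : eqType) (s s1 s2 : seq T) :
  \sum_(i <- iota 0 (size s).+1) ((drop i s == s2)%:R * (take i s == s1)%:R : R)
  = (s == s1 ++ s2)%:R.
Proof.
have split_eq i : (i <= size s)%N ->
    ((drop i s == s2) && (take i s == s1)) = (i == size s1) && (s == s1 ++ s2).
  move=> le_is; apply/andP/andP => [[/eqP <- /eqP <-]|[/eqP -> /eqP ->]].
    by rewrite size_takel // cat_take_drop.
  by rewrite drop_size_cat // take_size_cat.
rewrite big_seq (eq_bigr (fun i => ((i == size s1) && (s == s1 ++ s2))%:R)); last first.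
  by move=> i; rewrite mem_iota ltnS => /split_eq <-; rewrite -natrM mulnb.
rewrite -big_seq; have [->|_] := eqVneq s; last by rewrite big1 // => i _; rewrite andbF.
rewrite (bigD1_seq (size s1)) ?iota_uniq ?mem_iota ?size_cat ?ltnS ?leq_addr //=.
by rewrite eqxx big1 ?addr0 // => i /negbTE ->.
Qed.

Section DualBasis.
Variable K : fieldType.
Implicit Types (x y : H K) (X F G : forest).

Local Notation P := (pairF K).

Lemma pair_basis x G : pair x (basis K G) = linext x (P^~ G).
Proof. by apply: eq_bigr => p _; rewrite big_seq1 mulr1. Qed.

Lemma coef_linext x G : coef x G = linext x (fun F => (F == G)%:R).
Proof.
rewrite /coef big_mkcond; apply: eq_bigr => p _.
by case: eqP; rewrite ?mulr1 ?mulr0.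
Qed.

Lemma coef2_linext2 (w : H2 K) G1 G2 :
  coef2 w (G1, G2) = linext2 w (fun a b => (a == G1)%:R * (b == G2)%:R).
Proof.
rewrite /coef2 big_mkcond; apply: eq_bigr => [[c [a b]]] _ /=.
by rewrite xpair_eqE; do 2 case: eqP; rewrite ?mulr1 ?mulr0.
Qed.

Lemma linext_Bplus x g : linext (Bplus x) g = linext x (fun F => g [:: Node F]).
Proof. exact: linext_map. Qed.

Lemma linext_gamma x g :
  linext (gamma x) g = linext x (fun F => linext (gammaF K F) g).
Proof.
rewrite /linext /gamma big_flatten big_map; apply: eq_bigr => p _.
by rewrite big_map mulr_sumr; apply: eq_bigr => q _; rewrite mulrA.
Qed.

Lemma linext2_Delta x h :
  linext2 (Delta x) h = linext x (fun F => linext2 (deltaF K F) h).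
Proof.
rewrite /linext2 /linext /Delta big_flatten big_map; apply: eq_bigr => p _.
by rewrite big_map mulr_sumr; apply: eq_bigr => q _; rewrite mulrA.
Qed.

Lemma linext2_tensor x y g1 g2 :
  linext2 (tensor x y) (fun a b => g1 a * g2 b) = linext x g1 * linext y g2.
Proof.
rewrite /linext2 /linext /tensor big_allpairs_dep mulr_suml; apply: eq_bigr => p _.
by rewrite mulr_sumr; apply: eq_bigr => q _ /=; ring.
Qed.

Variable f : forest -> H K.
Hypothesis hf : forall F G, pair (f F) (basis K G) = (F == G)%:R.

Lemma pairF_dual F G : linext (f F) (P^~ G) = (F == G)%:R.
Proof. by rewrite -pair_basis hf. Qed.

Lemma eq_dual_expansion F G : (F == G)%:R = linext (f G) (P F).
Proof. by rewrite eq_sym -pairF_dual; apply: eq_linext => a; rewrite pairF_sym. Qed.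

Lemma heq_pairF x y : (forall G, linext x (P^~ G) = linext y (P^~ G)) -> heq x y.
Proof.
move=> E G; have coef_dual z : coef z G = linext (f G) (fun X => linext z (P^~ X)).
  rewrite coef_linext -exchange_linext; apply: eq_linext => a.
  exact: eq_dual_expansion.
by rewrite !coef_dual; apply: eq_linext.
Qed.

Lemma heq2_pairF (w w' : H2 K) :
  (forall G1 G2, linext2 w (fun a b => P a G1 * P b G2) =
                 linext2 w' (fun a b => P a G1 * P b G2)) ->
  heq2 w w'.
Proof.
move=> E [G1 G2]; have coef2_dual z : coef2 z (G1, G2) =
    linext (f G1) (fun X1 => linext (f G2) (fun X2 =>
      linext2 z (fun a b => P a X1 * P b X2))).
  rewrite coef2_linext2 (eq_linext2 _ (h' := fun a b => linext (f G1) (fun X1 =>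
      linext (f G2) (fun X2 => P a X1 * P b X2)))); last first.
    move=> a b; rewrite !eq_dual_expansion -linextMr; apply: eq_linext => X1.
    by rewrite -linextMl.
  rewrite /linext2 exchange_linext; apply: eq_linext => X1; exact: exchange_linext.
by rewrite !coef2_dual; apply: eq_linext => X1; apply: eq_linext => X2.
Qed.

Lemma Bplus_dual F : heq (Bplus (f F)) (f (bullet :: F)).
Proof.
apply: heq_pairF => G; rewrite pairF_dual linext_Bplus.
under eq_linext => X do rewrite pairF_node_l.
case: G => [|[[|u T]] G].
- by rewrite linext0.
- exact: pairF_dual.
- by rewrite linext0; case: eqP.
Qed.

Lemma pairF_gamma_dual F X :
  linext (gamma (f F)) (P^~ X) = (F == [:: Node X])%:R.
Proof.
rewrite linext_gamma -pairF_dual; apply: eq_linext => G; rewrite pairF_node_r.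
by case: G => [|[[|u T]] G]; rewrite /linext /= ?big_nil ?big_seq1 ?mul1r.
Qed.

Lemma gamma_dual_forest F : (forall t, F <> [:: t]) -> heq (gamma (f F)) [::].
Proof.
move=> Fnt; apply: heq_pairF => X; rewrite pairF_gamma_dual linext_nil.
by case: eqP => // /Fnt.
Qed.

Lemma gamma_dual_tree X : heq (gamma (f [:: Node X])) (f X).
Proof.
apply: heq_pairF => G; rewrite pairF_gamma_dual pairF_dual.
have -> : ([:: Node X] == [:: Node G]) = (X == G) by apply/eqP/eqP => [[]|->].
by [].
Qed.

Lemma Delta_dual F :
  heq2 (Delta (f F))
       (flatten [seq tensor (f (drop i F)) (f (take i F)) | i <- iota 0 (size F).+1]).
Proof.
apply: heq2_pairF => G1 G2; rewrite linext2_Delta.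
under eq_linext => X do rewrite -pairF_cat_r.
rewrite pairF_dual -(sum_take_drop_eq _ F G2 G1) /linext2 /linext big_flatten big_map.
by apply: eq_bigr => i _; rewrite -!pairF_dual -linext2_tensor.
Qed.

End DualBasis.

Theorem proposition21 (K : fieldType) (f : forest -> H K)
  (hf : forall F G : forest, pair (f F) (basis K G) = (F == G)%:R)
  (F : forest) :
  heq (Bplus (f F)) (f (bullet :: F))
  /\ ((forall t : tree, F <> [:: t]) -> heq (gamma (f F)) [::])
  /\ (forall F' : forest, F = [:: Node F'] -> heq (gamma (f F)) (f F'))
  /\ heq2 (Delta (f F))
       (flatten [seq tensor (f (drop i F)) (f (take i F)) | i <- iota 0 (size F).+1]).
Proof.
split; first exact: Bplus_dual.
split; first exact: gamma_dual_forest.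
split; first by move=> X ->; exact: gamma_dual_tree.
exact: Delta_dual.
Qed.
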